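(* Let $S=\langle P,\varphi\rangle$ be a SUT model, $t$ a strength, $N\ge1$ an integer and $lb$ an integer with $0\le lb<CAN(t,S)$. If $N\ge CAN(t,S)$, then the optimal cost of the Partial MaxSAT instance $PMSat_{CX}^{N,t,S,lb}$ (defined in the context) is $CAN(t,S)-(lb+1)$; otherwise (i.e. if $N<CAN(t,S)$) it is $\infty$.
   Context: A SUT model is $S=\langle P,\varphi\rangle$, where $P$ is a finite set of parameters, each $p\in P$ having a finite nonempty domain $d(p)$, and $\varphi$ is a propositional formula whose atoms have the form $(p=v)$ with $p\in P$, $v\in d(p)$. A test case is a full assignment $A$ giving each $p$ a value in $d(p)$ such that $\varphi$ is true when each atom $(p=v)$ is read as true iff $A(p)=v$; it is assumed that at least one test case exists. Fix a strength $t$ with $1\le t\le|P|$. A $t$-tuple is an assignment of values to exactly $t$ distinct parameters, viewed as a set of pairs $(p,v)$; a test case covers $\tau$ if it assigns $v$ to $p$ for every $(p,v)\in\tau$. A $t$-tuple is allowed if some test case covers it; $\mathcal T_a$ is the set of allowed $t$-tuples. A covering array $CA(N;t,S)$ is a list of $N$ test cases (repetitions allowed) covering every allowed $t$-tuple; $CAN(t,S)$ is the minimum $N$ for which a $CA(N;t,S)$ exists. $[N]=\{1,\dots,N\}$. A (weighted) Partial MaxSAT instance consists of hard constraints and soft clauses $(c,w)$ with positive integer weight $w$; its optimal cost is the minimum, over truth assignments satisfying all hard constraints, of the total weight of falsified soft clauses, and $\infty$ if the hard constraints are unsatisfiable. Variables: $x_{i,p,v}$ ($i\in[N]$, $p\in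 P$, $v\in d(p)$), $c^i_\tau$ ($i\in[N]$, $\tau\in\mathcal T_a$), $u_i$ ($i\in\{lb+2,\dots,N\}$). Hard constraints of $PMSat_{CX}^{N,t,S,lb}$: (X) for every $i\in[N]$, $p\in P$: exactly one of $\{x_{i,p,v}:v\in d(p)\}$ is true; (SUTX) for every $i\in[N]$: the formula obtained from $\varphi$ by replacing each atom $(p=v)$ with $x_{i,p,v}$; (CX) for every $i\in[N]$, $\tau\in\mathcal T_a$, $(p,v)\in\tau$: $c^i_\tau\rightarrow x_{i,p,v}$; (C) for every $\tau\in\mathcal T_a$: $\bigvee_{i\in[N]}c^i_\tau$; (BSU) for every $i\in\{lb+2,\dots,N-1\}$: $u_{i+1}\rightarrow u_i$; (CU) for every $i\in\{lb+2,\dots,N\}$, $\tau\in\mathcal T_a$: $c^i_\tau\rightarrow u_i$. Soft clauses: $(\neg u_i,1)$ for every $i\in\{lb+2,\dots,N\}$. *)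

From mathcomp Require Import all_boot.
Set Implicit Arguments. Unset Strict Implicit. Unset Printing Implicit Defensive.

Inductive formula (A : Type) : Type :=
| FTrue | FFalse
| FAtom of A
| FNot of formula A
| FAnd of formula A & formula A
| FOr of formula A & formula A
| FImp of formula A & formula A
| FIff of formula A & formula A.
Arguments FTrue {A}. Arguments FFalse {A}.

Fixpoint eval (A : Type) (rho : A -> bool) (f : formula A) : bool :=
  match f with
  | FTrue => true | FFalse => false
  | FAtom a => rho a
  | FNot g => ~~ eval rho g
  | FAnd g h => eval rho g && eval rho h
  | FOr g h => eval rho g || eval rho h
  | FImp g h => eval rho g ==> eval rho h
  | FIff g h => eval rho g == eval rho h
  end.

Fixpoint fren (A B : Type) (r : A -> B) (f : formula A) : formula B :=
  match f with
  | FTrue => FTrue | FFalse => FFalse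
  | FAtom a => FAtom (r a)
  | FNot g => FNot (fren r g)
  | FAnd g h => FAnd (fren r g) (fren r h)
  | FOr g h => FOr (fren r g) (fren r h)
  | FImp g h => FImp (fren r g) (fren r h)
  | FIff g h => FIff (fren r g) (fren r h)
  end.

Definition big_or (A : Type) (l : seq (formula A)) : formula A := foldr (@FOr A) FFalse l.
Definition big_and (A : Type) (l : seq (formula A)) : formula A := foldr (@FAnd A) FTrue l.
Fixpoint at_most_one (A : Type) (l : seq (formula A)) : formula A :=
  match l with
  | [::] => FTrue
  | a :: l' => FAnd (FImp a (big_and (map (@FNot A) l'))) (at_most_one l')
  end.
Definition exactly_one (A : Type) (l : seq (formula A)) : formula A :=
  FAnd (big_or l) (at_most_one l).

Record pmsat (V : Type) := PMSat {
  hard : formula V -> Prop;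
  soft : seq (formula V * nat) }.

Definition sat_hard (V : Type) (I : pmsat V) (rho : V -> bool) : Prop :=
  forall f, hard I f -> eval rho f.

Definition cost (V : Type) (I : pmsat V) (rho : V -> bool) : nat :=
  \sum_(cw <- soft I | ~~ eval rho cw.1) cw.2.

(* [opt_cost_is I o]: the optimal cost of I is o, where None stands for infinity *)
Definition opt_cost_is (V : Type) (I : pmsat V) (o : option nat) : Prop :=
  match o with
  | None => forall rho, ~ sat_hard I rho
  | Some k => (exists rho, sat_hard I rho /\ cost I rho = k) /\
              (forall rho, sat_hard I rho -> k <= cost I rho)
  end.

(* A SUT model: a finite type of parameters P, domains D p (finite types),
   and a formula phi over atoms (p = v), represented as dependent pairs. *)
Section SUT.
Variables (P : finType) (D : P -> finType).

Definition PV := {p : P & D p}.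
Definition assignment := {dffun forall p : P, D p}.

Definition atom_true (A : assignment) (pv : PV) : bool := A (tag pv) == tagged pv.

Definition test_case (phi : formula PV) (A : assignment) : bool := eval (atom_true A) phi.

Definition is_ttuple (t : nat) (tau : {set PV}) : bool :=
  (#|tau| == t) && [forall x in tau, forall y in tau, (tag x == tag y) ==> (x == y)].

Definition covers (A : assignment) (tau : {set PV}) : bool :=
  [forall pv in tau, atom_true A pv].

Definition allowed (phi : formula PV) (t : nat) (tau : {set PV}) : bool :=
  is_ttuple t tau && [exists A : assignment, test_case phi A && covers A tau].

Definition Ta (phi : formula PV) (t : nat) : {set {set PV}} := [set tau | allowed phi t tau].

Definition is_CA (phi : formula PV) (t N : nat) (s : seq assignment) : Prop :=
  size s = N /\ all (test_case phi) s /\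
  forall tau, tau \in Ta phi t -> has (fun A => covers A tau) s.

Definition is_CAN (phi : formula PV) (t n : nat) : Prop :=
  (exists s, is_CA phi t n s) /\ forall m s, is_CA phi t m s -> n <= m.

Inductive var : Type :=
| Xv of nat & PV
| Cv of nat & {set PV}
| Uv of nat.

Definition hard_CX (phi : formula PV) (N t lb : nat) (f : formula var) : Prop :=
  (exists i (p : P), 1 <= i <= N /\
     f = exactly_one [seq FAtom (Xv i (existT D p v)) | v <- enum (D p)])
  \/ (exists i, 1 <= i <= N /\ f = fren (Xv i) phi)
  \/ (exists i tau pv, [/\ 1 <= i <= N, tau \in Ta phi t, pv \in tau &
        f = FImp (FAtom (Cv i tau)) (FAtom (Xv i pv))])
  \/ (exists tau, tau \in Ta phi t /\
        f = big_or [seq FAtom (Cv i tau) | i <- iota 1 N])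
  \/ (exists i, lb + 2 <= i <= N - 1 /\ f = FImp (FAtom (Uv i.+1)) (FAtom (Uv i)))
  \/ (exists i tau, [/\ lb + 2 <= i <= N, tau \in Ta phi t &
        f = FImp (FAtom (Cv i tau)) (FAtom (Uv i))]).

Definition soft_CX (N lb : nat) : seq (formula var * nat) :=
  [seq (FNot (FAtom (Uv i)), 1) | i <- iota (lb + 2) (N - (lb + 1))].

Definition PMSat_CX (phi : formula PV) (N t lb : nat) : pmsat var :=
  PMSat (hard_CX phi N t lb) (soft_CX N lb).

End SUT.

From mathcomp Require Import all_boot zify.
Set Implicit Arguments. Unset Strict Implicit. Unset Printing Implicit Defensive.

(* A model of the hard constraints is read row by row as a list of N test
   cases. Since c^i_tau implies u_i and the u_i are downward closed, the true
   u_i are exactly u_(lb+2), ..., u_(lb+1+cost); hence no row beyond lb+1+cost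
   is needed for coverage, and the first min(N, lb+1+cost) rows already form a
   covering array, so CAN <= min(N, lb+1+cost). Conversely a covering array of
   size CAN <= N, padded with an arbitrary test case, together with
   u_i := (i <= CAN) is a model of cost CAN - (lb+1). *)

Lemma eval_fren A B (rho : B -> bool) (r : A -> B) f :
  eval rho (fren r f) = eval (rho \o r) f.
Proof. by elim: f => //= [g -> | g -> h -> | g -> h -> | g -> h -> | g -> h ->]. Qed.

Lemma eq_eval A (rho1 rho2 : A -> bool) f : rho1 =1 rho2 -> eval rho1 f = eval rho2 f.
Proof. by move=> E; elim: f => //= *; congruence. Qed.

Lemma eval_big_or A rho (l : seq (formula A)) : eval rho (big_or l) = has (eval rho) l.
Proof. by elim: l => //= a l ->. Qed.

Lemma eval_big_and A rho (l : seq (formula A)) : eval rho (big_and l) = all (eval rho) l.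
Proof. by elim: l => //= a l ->. Qed.

Lemma eval_at_most_one A rho (l : seq (formula A)) :
  eval rho (at_most_one l) = (count (eval rho) l <= 1).
Proof.
elim: l => //= a l ->; rewrite eval_big_and all_map.
case: (eval rho a) => //=.
rewrite add1n ltnS leqn0 (eq_all (a2 := predC (eval rho))) //.
by rewrite all_predC has_count; case: count.
Qed.

Lemma eval_exactly_one A rho (l : seq (formula A)) :
  eval rho (exactly_one l) = (count (eval rho) l == 1).
Proof. by rewrite /= eval_big_or eval_at_most_one has_count; case: count => [|[]]. Qed.

Lemma count_enumT (T : finType) (a : pred T) : count a (enum T) = #|a|.
Proof. by rewrite cardE enumT -size_filter. Qed.

Lemma count_leq_iota a n c : count (fun i => i <= c) (iota a n) = minn n (c.+1 - a).
Proof.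
elim: n a => [|n IHn] a /=; first by rewrite min0n.
by rewrite IHn; case: leqP; lia.
Qed.

Lemma cost_CX (P : finType) (D : P -> finType) phi N t lb (rho : var D -> bool) :
  cost (PMSat_CX phi N t lb) rho = count (rho \o Uv D) (iota (lb + 2) (N - (lb + 1))).
Proof.
by rewrite /cost /= /soft_CX big_map sum1_count; apply: eq_count => i /=; rewrite negbK.
Qed.

Section Decoding.
Variables (P : finType) (D : P -> finType) (phi : formula (PV D)) (t N lb : nat).
Variable rho : var D -> bool.
Hypothesis rho_hard : sat_hard (PMSat_CX phi N t lb) rho.
Local Notation pv p v := (@existT P (fun p => D p) p v).
Local Notation rho_cost := (cost (PMSat_CX phi N t lb) rho).

Lemma sat_X i p : 1 <= i <= N -> #|[pred v | rho (Xv i (pv p v))]| = 1.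
Proof.
move=> Hi; have : eval rho (exactly_one [seq FAtom (Xv i (pv p v)) | v <- enum (D p)]).
  by apply: rho_hard; left; exists i, p.
by rewrite eval_exactly_one count_map count_enumT => /eqP.
Qed.

Lemma sat_SUTX i : 1 <= i <= N -> eval (rho \o Xv i) phi.
Proof. by move=> Hi; rewrite -eval_fren; apply: rho_hard; right; left; exists i. Qed.

Lemma sat_hard_imp a b : hard_CX phi N t lb (FImp (FAtom a) (FAtom b)) -> rho a -> rho b.
Proof. by move=> /rho_hard /implyP. Qed.

Lemma sat_CX i tau x : 1 <= i <= N -> tau \in Ta phi t -> x \in tau ->
  rho (Cv i tau) -> rho (Xv i x).
Proof. by move=> Hi Htau Hx; apply: sat_hard_imp; do 2 right; left; exists i, tau, x. Qed.

Lemma sat_C tau : tau \in Ta phi t -> exists2 i, 1 <= i <= N & rho (Cv i tau).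
Proof.
move=> Htau; have : eval rho (big_or [seq FAtom (Cv i tau) | i <- iota 1 N]).
  by apply: rho_hard; do 3 right; left; exists tau.
rewrite eval_big_or has_map => /hasP[i]; rewrite mem_iota => Hi Hc.
by exists i => //; lia.
Qed.

Lemma sat_BSU i : lb + 2 <= i -> i < N -> rho (Uv D i.+1) -> rho (Uv D i).
Proof.
by move=> Hlb HN; apply: sat_hard_imp; do 4 right; left; exists i; split => //; lia.
Qed.

Lemma sat_CU i tau : lb + 2 <= i <= N -> tau \in Ta phi t ->
  rho (Cv i tau) -> rho (Uv D i).
Proof.
by move=> Hi Htau; apply: sat_hard_imp; do 5 right; exists i, tau.
Qed.

Variable A0 : assignment D.

Definition row i : assignment D :=
  [ffun p => odflt (A0 p) [pick v | rho (Xv i (pv p v))]].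

Lemma atom_true_row i : 1 <= i <= N -> atom_true (row i) =1 rho \o Xv i.
Proof.
move=> Hi [p v]; have /eqP/card1P[v0 Ev0] := sat_X p Hi.
have Ev w : rho (Xv i (pv p w)) = (w == v0) by have := Ev0 w; rewrite !inE.
rewrite /atom_true /row ffunE /= Ev.
by case: pickP => [w | /(_ v0)]; rewrite Ev ?eqxx // => /eqP ->.
Qed.

Lemma test_case_row i : 1 <= i <= N -> test_case phi (row i).
Proof. by move=> Hi; rewrite /test_case (eq_eval _ (atom_true_row Hi)) sat_SUTX. Qed.

Lemma CA_rows M : M <= N ->
    (forall i tau, M < i <= N -> tau \in Ta phi t -> ~~ rho (Cv i tau)) ->
  is_CA phi t M [seq row i | i <- iota 1 M].
Proof.
move=> MN Hc; split; first by rewrite size_map size_iota.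
split.
  by apply/allP => r /mapP[i]; rewrite mem_iota => Hi ->; apply: test_case_row; lia.
move=> tau Htau; have [i Hi Hci] := sat_C Htau.
have iM : i <= M by case: leqP => // Mi; have := Hc i tau; rewrite Hci Htau; lia.
apply/hasP; exists (row i); first by apply: map_f; rewrite mem_iota; lia.
apply/forallP => x; apply/implyP => xtau.
by rewrite atom_true_row //; apply: sat_CX Hci.
Qed.

Lemma U_downward j i : lb + 2 <= j <= i -> i <= N -> rho (Uv D i) -> rho (Uv D j).
Proof.
elim: i => [|i IHi] Hji HiN Hu; first by lia.
have [-> // | ji] := eqVneq j i.+1.
by apply: IHi; [lia | lia | apply: sat_BSU => //; lia].
Qed.

Lemma U_le_cost i : lb + 2 <= i <= N -> rho (Uv D i) -> i <= lb + 1 + rho_cost.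
Proof.
move=> Hi Hu; rewrite cost_CX.
have sub : subpred (fun j => (lb + 2 <= j) && (j <= i)) (rho \o Uv D).
  by move=> j Hj; apply: (U_downward Hj) => //; lia.
have := sub_count sub (iota (lb + 2) (N - (lb + 1))).
rewrite -(@eq_in_count _ (fun j => j <= i)) ?count_leq_iota; first by lia.
by move=> j; rewrite mem_iota => /andP[->].
Qed.

Lemma CAN_le_cost can : is_CAN phi t can -> can <= minn N (lb + 1 + rho_cost).
Proof.
case=> _ can_min; apply: can_min (CA_rows (geq_minl _ _) _) => i tau Hi Htau.
apply/negP => Hc; have Hi' : lb + 2 <= i <= N by lia.
by have := U_le_cost Hi' (sat_CU Hi' Htau Hc); lia.
Qed.

End Decoding.

Section Encoding.
Variables (P : finType) (D : P -> finType) (phi : formula (PV D)) (t n : nat).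
Variables (s : seq (assignment D)) (A0 : assignment D).
Hypothesis s_CA : is_CA phi t n s.
Hypothesis A0_test : test_case phi A0.

(* [nth A0] pads the rows beyond [size s] with the test case [A0], so that
   every row satisfies (SUTX). *)
Definition model_of_CA (v : var D) : bool :=
  match v with
  | Xv i x => atom_true (nth A0 s i.-1) x
  | Cv i tau => (i <= n) && covers (nth A0 s i.-1) tau
  | Uv i => i <= n
  end.

Lemma model_of_CA_hard N lb : n <= N -> sat_hard (PMSat_CX phi N t lb) model_of_CA.
Proof.
case: s_CA => s_size [s_test s_cov] nN f.
case=> [[i [p [_ ->]]] | [[i [_ ->]] | [[i [tau [x [_ _ Hx ->]]]] |
        [[tau [Htau ->]] | [[i [Hi ->]] | [i [tau [_ _ ->]]]]]]]].
- rewrite eval_exactly_one count_map (eq_count (a2 := pred1 (nth A0 s i.-1 p))).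
    by rewrite count_enumT card1.
  by move=> v; apply: eq_sym.
- rewrite eval_fren; change (test_case phi (nth A0 s i.-1)).
  have [ilt | ige] := ltnP i.-1 (size s).
    exact/(allP s_test)/mem_nth.
  by rewrite nth_default.
- by apply/implyP => /andP[_ /forallP/(_ x)]; rewrite Hx.
- have /hasP[A As Acov] := s_cov tau Htau.
  rewrite eval_big_or has_map; apply/hasP; exists (index A s).+1 => /=.
    by rewrite mem_iota; move: As; rewrite -index_mem s_size; lia.
  by rewrite nth_index // Acov andbT -s_size index_mem.
- by apply/implyP => /ltnW.
- by apply/implyP => /andP[].
Qed.

Lemma cost_model_of_CA N lb : lb < n <= N ->
  cost (PMSat_CX phi N t lb) model_of_CA = n - (lb + 1).
Proof. by move=> Hn; rewrite cost_CX count_leq_iota; lia. Qed.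

End Encoding.

Theorem proposition3 (P : finType) (D : P -> finType) (phi : formula (PV D))
    (t N lb can : nat) :
  (exists A : assignment D, test_case phi A) ->
  1 <= t <= #|P| ->
  1 <= N ->
  is_CAN phi t can ->
  lb < can ->
  opt_cost_is (PMSat_CX phi N t lb)
    (if can <= N then Some (can - (lb + 1)) else None).
Proof.
move=> [A0 A0_test] _ _ can_CAN lb_can.
have lower rho : sat_hard (PMSat_CX phi N t lb) rho ->
    can <= N /\ can - (lb + 1) <= cost (PMSat_CX phi N t lb) rho.
  by move=> /CAN_le_cost/(_ A0 _ can_CAN); rewrite leq_min; lia.
case: leqP => [can_N | N_can]; last by move=> rho /lower; lia.
have [[s s_CA] _] := can_CAN.
split=> [|rho /lower []//].
exists (model_of_CA can s A0); split; first exact: model_of_CA_hard.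
by apply: cost_model_of_CA => //; lia.
Qed.
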